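(* Let $g$ be a function assigning to each prime $p$ a set of primes $g(p)$ with $p\in g(p)$, let $h(p)=\mathfrak{G}_{g(p)}$, and let $\mathfrak{F}$ be the local formation locally defined by $h$. Let $G$ be a finite group, $K\trianglelefteq G$, and $H/K$ a chief factor of $G$. Then $H/K\le \mathrm{Int}_{\mathfrak{F}}(G/K)$ if and only if $G/C_G(H/K)\in h(p)$ for every $p\in\pi(H/K)$.
   Context: $\pi(X)$ is the set of primes dividing $|X|$; $\mathfrak{G}_\sigma$ is the class of all finite $\sigma$-groups. The local formation locally defined by $h$ is $\mathfrak{F}=\{G : G/C_G(H/K)\in h(p)$ for every chief factor $H/K$ of $G$ and every $p\in\pi(H/K)\}$. An $\mathfrak{F}$-maximal subgroup of $G$ is a subgroup in $\mathfrak{F}$ maximal among such subgroups; $\mathrm{Int}_{\mathfrak{F}}(G)$ is the intersection of all $\mathfrak{F}$-maximal subgroups of $G$. *)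

From mathcomp Require Import all_boot all_fingroup all_solvable.
Set Implicit Arguments.
Unset Strict Implicit.
Unset Printing Implicit Defensive.
Local Open Scope group_scope.

Definition sect_cent (gT : finGroupType) (X H K : {set gT}) : {set gT} :=
  [set x in X | [forall h in H, [~ h, x] \in K]].

(* Membership of X in the local formation F locally defined by
   h(p) = G_{g(p)}: for every chief factor H/K of X and every prime
   p dividing |H/K|, X / C_X(H/K) is a g(p)-group. *)
Definition inF (g : nat -> nat_pred) (gT : finGroupType) (X : {set gT}) : bool :=
  [forall K : {group gT}, forall H : {group gT},
     chief_factor X K H ==>
     [forall p : 'I_#|H / K|.+1, (nat_of_ord p \in \pi(H / K)) ==>
        (g (nat_of_ord p)).-group (X / sect_cent X H K)]].

Definition Fmaximal (g : nat -> nat_pred) (gT : finGroupType) (G X : {set gT}) : bool :=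
  [&& X \subset G, inF g X &
      [forall Y : {group gT}, [&& X \subset Y, Y \subset G & inF g Y] ==> (Y == X :> {set gT})]].

Definition IntF (g : nat -> nat_pred) (gT : finGroupType) (G : {set gT}) : {set gT} :=
  \bigcap_(X : {group gT} | Fmaximal g G X) (X : {set gT}).

From mathcomp Require Import all_boot all_fingroup all_solvable.
Set Implicit Arguments.
Unset Strict Implicit.
Unset Printing Implicit Defensive.
Local Open Scope group_scope.

(* Let N = H/K, a minimal normal subgroup of Gbar = G/K, and C = C_Gbar(N).
   If N <= Int_F(Gbar), p divides |N| and a prime q not in g(p) divides
   |Gbar : C|, a Sylow q-subgroup Q of Gbar is in F (as q is in g(q)), hence
   lies in an F-maximal subgroup X, which contains N.  As X is in F, Q acts
   trivially on every X-chief factor of order divisible by p.  For abelian N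
   (a p-group) coprime action along an X-chief series through N gives [N, Q] = 1;
   for non-abelian N, Q centralizes the subgroup D generated by the minimal
   normal subgroups of X inside N, C_N(D) = 1 because F(N) = 1, and the three
   subgroups lemma gives [N, Q] = 1.  So Q <= C, a contradiction.
   Conversely, if Gbar/C is a g(p)-group for every p dividing |N|, then NX is
   in F whenever X is.  A chief factor A/B of NX with A <= NB has its primes in
   pi(N) and is centralized by C_NX(N), so its centralizer quotient is a
   quotient of a subgroup of Gbar/C; otherwise NA/NB is an NX-isomorphic chief
   factor above N, which meets X in a chief factor of X with the same
   centralizer quotient.  Hence N lies in every F-maximal subgroup. *)

Section GroupTheory.
Variable gT : finGroupType.
Implicit Types (G X Y A B C M N Q L S : {group gT}).

Lemma chief_factorP X B A :
  reflect [/\ B \proper A, X \subset 'N(B), A <| X &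
             forall M, M \proper A -> X \subset 'N(M) -> B \subset M -> M :=: B]
          (chief_factor X B A).
Proof.
apply: (iffP andP) => [[/maxgroupP[/andP[pBA nBX] maxB] nsAX] | [pBA nBX nsAX maxB]].
  by split=> // M pMA nMX; apply: maxB; rewrite pMA.
split=> //; apply/maxgroupP; split=> [|M /andP[]]; [by rewrite pBA | exact: maxB].
Qed.

Lemma chief_factor_exists X M : M <| X -> M :!=: 1 -> exists L, chief_factor X L M.
Proof.
move=> nsMX ntM; have [L maxL] : {L : {group gT} | maxnormal L M X}.
  by apply: ex_maxgroup; exists 1%G; rewrite proper1G ntM norms1.
by exists L; apply/andP.
Qed.

Lemma chief_factor1 X M : minnormal M X -> M \subset X -> chief_factor X 1 M.
Proof.
case/mingroupP=> [/andP[ntM nMX] minM] sMX; apply/chief_factorP.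
split; [by rewrite proper1G | exact: norms1 | by rewrite /normal sMX | ].
move=> L pLM nLX _; have [// | ntL] := eqsVneq L 1.
have LM : L :=: M by apply: minM; rewrite ?ntL ?nLX ?proper_sub.
by rewrite LM properxx in pLM.
Qed.

Lemma minnormal_pi_sub G N M p : minnormal N G -> p \in \pi(N) ->
  M \subset N -> N \subset 'N(M) -> M :!=: 1 -> p \in \pi(M).
Proof.
case/mingroupP=> [/andP[_ nNG] minN] pN sMN nMN ntM; apply: contraT => pM.
have p'M : p^'.-group M.
  apply/pgroupP => r r_pr rM; rewrite !inE; apply: contraNneq pM => <-.
  by rewrite mem_primes r_pr cardG_gt0.
have sMO : M \subset 'O_p^'(N) by rewrite pcore_max // /normal sMN.
have ON : 'O_p^'(N) :=: N.
  apply: minN; last exact: pcore_sub.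
  rewrite (char_norm_trans (pcore_char _ _) nNG) andbT.
  by apply: contraNneq ntM => O1; rewrite -subG1 -O1.
have := pnatPpi (pcore_pgroup p^' N); rewrite ON => /(_ p pN).
by rewrite !inE eqxx.
Qed.

Lemma coprime_cents_factor Q M L : Q \subset 'N(M) -> Q \subset 'N(L) -> L <| M ->
  coprime #|L| #|Q| -> solvable L -> Q \subset 'C(L) -> [~: M, Q] \subset L ->
  Q \subset 'C(M).
Proof.
move=> nMQ nLQ nsLM coLQ solL cLQ sMQL; have [sLM nLM] := andP nsLM.
have cMQbar : 'C_(M / L)(Q / L) = M / L by apply/setIidPl; rewrite quotient_cents2.
have nsLC : L <| 'C_M(Q) by rewrite /normal subsetI sLM centsC cLQ subIset ?nLM.
have := coprime_norm_quotient_cent nMQ nLQ coLQ solL; rewrite cMQbar => eqCM.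
by rewrite centsC -(quotient_inj nsLC nsLM eqCM) subsetIr.
Qed.

Lemma Fitting_minnormal_nonabelian G N : minnormal N G -> ~~ abelian N -> 'F(N) = 1.
Proof.
move=> minN; apply: contraNeq => ntF.
have [/andP[_ nNG] minNG] := mingroupP minN.
have FN : 'F(N) :=: N.
  by apply: minNG; rewrite ?Fitting_sub // ntF (char_norm_trans (Fitting_char N) nNG).
have solN : solvable N by rewrite -FN nilpotent_sol ?Fitting_nil.
by have [_ _ /abelem_abelian] := minnormal_solvable minN (subxx N) solN.
Qed.

Lemma Fitting1_cents_minnormal X N Q : 'F(N) = 1 -> N <| X -> Q \subset X ->
  (forall M, minnormal M X -> M \subset N -> Q \subset 'C(M)) -> Q \subset 'C(N).
Proof.
move=> F1 /andP[sNX nNX] sQX cQmin.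
pose D := <<\bigcup_(M : {group gT} | minnormal M X && (M \subset N)) M>>.
have cDQ : D \subset 'C(Q).
  by rewrite gen_subG; apply/bigcupsP => M /andP[minM sMN]; rewrite centsC cQmin.
have nDX : X \subset 'N(D).
  rewrite norms_gen // norms_bigcup //; apply/bigcapsP => M /andP[minM _].
  by case/mingroupP: minM => /andP[].
(* A minimal normal subgroup of X inside C_N(D) would be abelian and normal in N. *)
have CD1 : 'C_N(D) = 1.
  apply/eqP; apply: contraT => ntC.
  have [M minM sMC] := minnormal_exists ntC (normsI nNX (norms_cent nDX)).
  have [/andP[ntM nMX] _] := mingroupP minM.
  have sMN : M \subset N := subset_trans sMC (subsetIl _ _).
  have sMD : M \subset D by rewrite sub_gen // (bigcup_sup M) ?minM.
  have cMM : abelian M := subset_trans (subset_trans sMC (subsetIr _ _)) (centS sMD).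
  have nsMN : M <| N by rewrite /normal sMN (subset_trans sNX).
  by have := Fitting_max nsMN (abelian_nil cMM); rewrite F1 subG1 (negPf ntM).
have cNQD : [~: N, Q, D] = 1.
  apply: (three_subgroup (G := Q) (H := [group of D])).
    have /commG1P -> : Q \subset 'C(D) by rewrite centsC.
    exact: comm1G.
  apply/commG1P; apply: subset_trans cDQ; rewrite commg_subl.
  exact: subset_trans sNX nDX.
have : [~: N, Q] \subset 'C_N(D).
  by rewrite subsetI commg_subl (subset_trans sQX nNX); apply/commG1P.
by rewrite CD1 subG1 => /eqP/commG1P; rewrite centsC.
Qed.

Lemma mem_commg_norml N A n a : A \subset 'N(N) -> n \in N -> a \in A -> [~ n, a] \in N.
Proof.
move=> nNA Nn Aa; have sNAN : [~: N, A] \subset N by rewrite commg_subl.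
exact: subsetP sNAN _ (mem_commg Nn Aa).
Qed.

Lemma pi_quotient_joing N B A : B \subset 'N(N) -> A \subset 'N(B) ->
  A \subset N <*> B -> {subset \pi(A / B) <= \pi(N)}.
Proof.
move=> nNB nBA sANB p; rewrite !mem_primes => /and3P[-> _ pAB]; rewrite cardG_gt0 /=.
apply: dvdn_trans pAB (dvdn_trans (cardSg (quotientS B sANB)) _).
by rewrite /= norm_joinEr // quotientMidr dvdn_morphim.
Qed.

Lemma quotient_pgroupSI pi G C Y S : pi.-group (G / C) -> G \subset 'N(C) ->
  Y \subset G -> Y :&: C \subset S -> Y \subset 'N(S) -> pi.-group (Y / S).
Proof.
move=> piGC nCG sYG sYCS nSY; rewrite /pgroup card_quotient //.
apply: pnat_dvd (indexgS Y sYCS) _; rewrite indexgI -card_quotient ?(subset_trans sYG) //.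
exact: pnat_dvd (cardSg (quotientS C sYG)) piGC.
Qed.

End GroupTheory.

Section SectionCentralizer.
Variable gT : finGroupType.
Implicit Types (X Y A B N Q : {group gT}).

Lemma sect_centP (X H K : {set gT}) x :
  reflect (x \in X /\ forall h, h \in H -> [~ h, x] \in K) (x \in sect_cent X H K).
Proof.
rewrite inE; apply: (iffP andP) => [[-> /forall_inP //] | [-> cHx]].
by split=> //; apply/forall_inP.
Qed.

Lemma sect_centE X A B : X \subset 'N(B) -> A \subset 'N(B) ->
  sect_cent X A B = X :&: coset B @*^-1 'C(A / B).
Proof.
move=> nBX nBA; apply/setP => x; rewrite inE [in RHS]inE; apply: andb_id2l => Xx.
have nBx : x \in 'N(B) := subsetP nBX x Xx.
rewrite inE nBx [x \in _ @^-1: _]inE.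
apply/forall_inP/centP => [cAx _ /morphimP[a nBa Aa ->] | cAx a Aa].
  by apply: commute_sym; apply/commgP; rewrite -morphR //= coset_id ?cAx.
have nBa : a \in 'N(B) := subsetP nBA a Aa.
apply: coset_idr; first by rewrite groupR.
rewrite morphR //; apply/eqP/commgP/commute_sym/cAx; exact: mem_quotient.
Qed.

Lemma sect_cent_norm X A B : X \subset 'N(A) -> X \subset 'N(B) -> A \subset 'N(B) ->
  X \subset 'N(sect_cent X A B).
Proof.
move=> nAX nBX nBA; rewrite sect_centE // normsI ?normG // norm_quotient_pre //.
by rewrite norms_cent ?quotient_norms.
Qed.

Lemma sub_sect_cent X A B Q : Q \subset X ->
  (Q \subset sect_cent X A B) = ([~: A, Q] \subset B).
Proof.
move=> sQX; apply/subsetP/idP => [cAQ | sAQB y Qy].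
  rewrite gen_subG; apply/subsetP => _ /imset2P[a y Aa Qy ->].
  by case/sect_centP: (cAQ y Qy) => _; apply.
apply/sect_centP; split=> [|a Aa]; first exact: subsetP sQX y Qy.
by rewrite (subsetP sAQB) ?mem_commg.
Qed.

Lemma card_quotient_sect_cent X A B : A <| X -> B <| X ->
  #|(X / B) / 'C_(X / B)(A / B)| = #|X / sect_cent X A B|.
Proof.
move=> /andP[sAX nAX] /andP[sBX nBX]; have nBA := subset_trans sAX nBX.
have nCX := sect_cent_norm nAX nBX nBA; rewrite sect_centE // in nCX *.
have -> : 'C_(X / B)(A / B) = (X :&: coset B @*^-1 'C(A / B)) / B.
  by rewrite /quotient morphim_setIpre.
rewrite !card_quotient ?quotient_norms //.
by rewrite index_quotient_eq ?subsetIl ?setIS ?sub_cosetpre.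
Qed.

Lemma cent_sub_sect_cent_joing Y N B A : Y \subset 'N(B) -> B \subset 'N(N) ->
  A \subset N <*> B -> 'C_Y(N) \subset sect_cent Y A B.
Proof.
move=> nBY nNB sANB; apply/subsetP => x /setIP[Yx cNx]; apply/sect_centP; split=> // a.
move/(subsetP sANB); rewrite norm_joinEr // => /mulsgP[n b Nn Bb ->].
have nx1 : [~ n, x] = 1 by apply/eqP/commgP/esym/(centP cNx).
by rewrite commMgJ nx1 conj1g mul1g (mem_commg_norml nBY Bb Yx).
Qed.

End SectionCentralizer.

Section MeetWithComplement.
Variable gT : finGroupType.
Implicit Types (A B M : {group gT}).

Variables (Y N X : {group gT}).
Hypotheses (nNY : Y \subset 'N(N)) (defY : N * X = Y).

Let sNY : N \subset Y. Proof. by rewrite -defY mulG_subl. Qed.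
Let sXY : X \subset Y. Proof. by rewrite -defY mulG_subr. Qed.

Lemma mulg_meet_above A : N \subset A -> A \subset Y -> N * (X :&: A) = A.
Proof. by move=> sNA sAY; rewrite group_modl // defY (setIidPr sAY). Qed.

Lemma chief_factor_meet B A : N \subset B -> chief_factor Y B A ->
  chief_factor X (X :&: B) (X :&: A).
Proof.
move=> sNB /chief_factorP[pBA nBY /andP[sAY nAY] maxB]; have sBA := proper_sub pBA.
have defA := mulg_meet_above (subset_trans sNB sBA) sAY.
have defB := mulg_meet_above sNB (subset_trans sBA sAY).
have nNX := subset_trans sXY nNY.
apply/chief_factorP; split.
- rewrite properEneq setIS // andbT; apply: contraTneq pBA => eqXBA.
  by rewrite -defA -defB eqXBA properxx.
- by rewrite normsI ?normG ?(subset_trans sXY).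
- by rewrite /normal subsetIl normsI ?normG ?(subset_trans sXY).
move=> M pM nMX sXBM; have sMX := subset_trans (proper_sub pM) (subsetIl X A).
have defNM : N <*> M = N * M := norm_joinEr (subset_trans sMX nNX).
have meetNM : X :&: (N <*> M) = M.
  rewrite defNM -group_modr // mulSGid //.
  exact: subset_trans (setIS X sNB) sXBM.
have nNMY : Y \subset 'N(N <*> M).
  by rewrite -defY mul_subG ?(normsY nNX nMX) // (subset_trans (joing_subl N M)) ?normG.
have sBNM : B \subset N <*> M by rewrite defNM -defB mulgS.
have sNMA : N <*> M \subset A by rewrite defNM -defA mulgS ?proper_sub.
have pNMA : N <*> M \proper A.
  rewrite properEneq sNMA andbT; apply: contraTneq pM => eqNMA.
  by rewrite /= -eqNMA meetNM properxx.
by rewrite -meetNM (maxB _ pNMA nNMY sBNM).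
Qed.

Lemma sect_cent_meet B A : N \subset B -> chief_factor Y B A ->
  sect_cent X (X :&: A) (X :&: B) = X :&: sect_cent Y A B.
Proof.
move=> sNB /chief_factorP[pBA nBY /andP[sAY nAY] _]; have sBA := proper_sub pBA.
have defA := mulg_meet_above (subset_trans sNB sBA) sAY.
apply/setP => x; apply/sect_centP/setIP => [[Xx cAx] | [Xx /sect_centP[_ cAx]]].
  have Yx := subsetP sXY x Xx; split=> //; apply/sect_centP; split=> // z.
  rewrite -defA => /mulsgP[n a Nn /setIP[Xa Aa] ->].
  have NBn := subsetP sNB _ (mem_commg_norml nNY Nn Yx).
  rewrite commMgJ groupM ?memJ_norm ?(subsetP nBY) ?(subsetP sAY) //.
  by apply: (subsetP (subsetIr X B)); apply: cAx; rewrite inE Xa.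
by split=> // a /setIP[Xa Aa]; rewrite inE groupR ?cAx.
Qed.

Lemma card_quotient_meet B A : N \subset B -> chief_factor Y B A ->
  #|(X :&: A) / (X :&: B)| = #|A / B|.
Proof.
move=> sNB /chief_factorP[pBA nBY /andP[sAY _] _]; have sBA := proper_sub pBA.
have defA := mulg_meet_above (subset_trans sNB sBA) sAY.
have defBA : B * (X :&: A) = A.
  by apply/eqP; rewrite eqEsubset mul_subG ?subsetIr //= -{1}defA mulSg.
have nXB_X : X \subset 'N(X :&: B) by rewrite normsI ?normG ?(subset_trans sXY).
rewrite !card_quotient ?(subset_trans sAY) ?(subset_trans (subsetIl X A)) //.
by rewrite -{2}defBA indexMg -[RHS]indexgI -setIA (setIidPr sBA).
Qed.

Lemma card_quotient_sect_cent_meet B A : N \subset B -> chief_factor Y B A ->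
  #|X / sect_cent X (X :&: A) (X :&: B)| = #|Y / sect_cent Y A B|.
Proof.
move=> sNB cf; have /chief_factorP[_ nBY /andP[sAY nAY] _] := cf.
have nCY := sect_cent_norm nAY nBY (subset_trans sAY nBY).
have sNC : N \subset sect_cent Y A B.
  by rewrite sub_sect_cent // (subset_trans _ sNB) // commg_subr (subset_trans sAY).
rewrite sect_cent_meet // sect_centE ?(subset_trans sAY) // in nCY sNC *.
set C := Y :&: _ in nCY sNC *.
have defCX : C * X = Y.
  by apply/eqP; rewrite eqEsubset mul_subG ?subsetIl //= -{1}defY mulSg.
by rewrite -defCX quotientMidl (setIC X) (card_isog (second_isog (subset_trans sXY nCY))).
Qed.

End MeetWithComplement.

Section JoinWithNormal.
Variable gT : finGroupType.
Implicit Types (A B M : {group gT}).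

Variables (Y N : {group gT}).
Hypothesis nsNY : N <| Y.

Let sNY : N \subset Y. Proof. exact: normal_sub nsNY. Qed.
Let nNY : Y \subset 'N(N). Proof. exact: normal_norm nsNY. Qed.

Lemma mulg_joing_sub B A : B \subset A -> A \subset Y -> (N <*> B) * A = N <*> A.
Proof.
move=> sBA sAY; have nNA := subset_trans sAY nNY.
by rewrite !norm_joinEr ?(subset_trans sBA) // -mulgA (mulSGid sBA).
Qed.

Lemma joing_meet_chief B A : chief_factor Y B A -> ~~ (A \subset N <*> B) ->
  (N <*> B) :&: A = B.
Proof.
move=> /chief_factorP[pBA nBY /andP[_ nAY] maxB] sA'NB; apply: maxB.
- by rewrite properEneq subsetIr andbT; apply: contraNneq sA'NB => <-; apply: subsetIl.
- by rewrite normsI ?normsY.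
by rewrite subsetI joing_subr proper_sub.
Qed.

Lemma chief_factor_join B A : chief_factor Y B A -> ~~ (A \subset N <*> B) ->
  chief_factor Y (N <*> B) (N <*> A).
Proof.
move=> cf sA'NB; have /chief_factorP[pBA nBY /andP[sAY nAY] maxB] := cf.
have sBA := proper_sub pBA.
have sNBNA : N <*> B \subset N <*> A by rewrite genS ?setUS.
apply/chief_factorP; split.
- rewrite properEneq sNBNA andbT; apply: contraNneq sA'NB => ->.
  exact: joing_subr.
- by rewrite normsY.
- by rewrite /normal join_subG sNY sAY normsY.
move=> M pM nMY sNBM; have sNM := subset_trans (joing_subl N B) sNBM.
have meetMA : M :&: A = B.
  apply: maxB; last by rewrite subsetI (subset_trans (joing_subr N B) sNBM) sBA.
    rewrite properEneq subsetIr andbT; apply: contraTneq pM => eqMA.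
    by rewrite properE join_subG sNM -eqMA subsetIl andbF.
  by rewrite normsI.
have defNA := mulg_joing_sub sBA sAY.
have := @group_modl _ (N <*> B) A M sNBM.
by rewrite defNA (setIidPr (proper_sub pM)) setIC meetMA mulGSid ?joing_subr.
Qed.

Lemma sect_cent_join B A : chief_factor Y B A -> ~~ (A \subset N <*> B) ->
  sect_cent Y (N <*> A) (N <*> B) = sect_cent Y A B.
Proof.
move=> cf sA'NB; have meetNBA := joing_meet_chief cf sA'NB.
have /chief_factorP[_ nBY /andP[sAY nAY] _] := cf; have nNA := subset_trans sAY nNY.
apply/setP => x; apply/sect_centP/sect_centP => -[Yx cAx]; split=> // a.
  move=> Aa; rewrite -meetNBA inE cAx ?mem_gen ?inE ?Aa ?orbT //.
  exact: mem_commg_norml nAY Aa Yx.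
rewrite norm_joinEr // => /mulsgP[n a' Nn Aa' ->].
have nNBa' : a' \in 'N(N <*> B) := subsetP (normsY nNY nBY) a' (subsetP sAY a' Aa').
rewrite commMgJ groupM ?(subsetP (joing_subr N B) _ (cAx a' Aa')) // memJ_norm //.
exact: subsetP (joing_subl N B) _ (mem_commg_norml nNY Nn Yx).
Qed.

Lemma card_quotient_join B A : chief_factor Y B A -> ~~ (A \subset N <*> B) ->
  #|(N <*> A) / (N <*> B)| = #|A / B|.
Proof.
move=> cf sA'NB; have meetNBA := joing_meet_chief cf sA'NB.
have /chief_factorP[pBA nBY /andP[sAY _] _] := cf.
rewrite -(mulg_joing_sub (proper_sub pBA) sAY) [LHS]card_quotient; last first.
  by rewrite mul_subG ?normG ?(subset_trans sAY) ?normsY.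
by rewrite indexMg -indexgI setIC meetNBA card_quotient ?(subset_trans sAY).
Qed.

End JoinWithNormal.

Section LocalFormation.
Variable g : nat -> nat_pred.
Variable gT : finGroupType.
Implicit Types (G X Y A B M N Q L : {group gT}).

Lemma inFP X :
  reflect (forall B A, chief_factor X B A -> forall p, p \in \pi(A / B) ->
             (g p).-group (X / sect_cent X A B))
          (inF g X).
Proof.
apply: (iffP forallP) => [FX B A cf p pAB | FX B].
  have /forallP := implyP (forallP (FX B) A) cf.
  have lt_p : p < #|A / B|.+1.
    by move: pAB; rewrite mem_primes ltnS => /and3P[_ AB_gt0 /dvdn_leq->].
  by move/(_ (Ordinal lt_p))/implyP; apply.
by apply/forallP => A; apply/implyP => cf; apply/forallP => p; apply/implyP; apply: FX.
Qed.

Lemma inF_chief_cent X B A Q (p q : nat) :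
  inF g X -> chief_factor X B A -> p \in \pi(A / B) -> q \notin g p ->
  q.-group Q -> Q \subset X -> [~: A, Q] \subset B.
Proof.
move=> /inFP FX cf pAB gp'q qQ sQX; have gX := FX B A cf p pAB.
have /chief_factorP[_ nBX /andP[sAX nAX] _] := cf; have nBA := subset_trans sAX nBX.
have nCX := sect_cent_norm nAX nBX nBA.
suff : Q \subset sect_cent X A B by rewrite sub_sect_cent.
rewrite sect_centE // in nCX gX *.
rewrite -(quotient_sub1 (subset_trans sQX nCX)) subG1 trivg_card1; apply/eqP.
apply: (pnat_1 (quotient_pgroup _ qQ)); apply: sub_in_pnat (pgroupS (quotientS _ sQX) gX).
by move=> r _ gp_r; rewrite !inE; apply: contraNneq gp'q => <-.
Qed.

Lemma Fmaximal_exists G Q : Q \subset G -> inF g Q ->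
  exists2 X : {group gT}, Fmaximal g G X & Q \subset X.
Proof.
move=> sQG FQ; pose P Y := (Y \subset G) && inF g Y.
have PQ : P Q by apply/andP.
have [X /maxgroupP[/andP[sXG FX] maxX] sQX] := maxgroup_exists PQ.
exists X => //; apply/and3P; split=> //; apply/forall_inP => Y /and3P[sXY sYG FY].
by apply/eqP; apply: maxX; rewrite // /P sYG.
Qed.

Lemma inF_cents_pgroup X M Q (p q : nat) : inF g X -> p.-group M -> M <| X ->
  q.-group Q -> Q \subset X -> q \notin g p -> p != q -> Q \subset 'C(M).
Proof.
move=> FX + + qQ sQX gp'q pq.
have p'Q : p^'.-group Q.
  by apply: sub_in_pnat qQ => r _; rewrite !inE => /eqP->; rewrite eq_sym.
have [n] := ubnP #|M|; elim: n M => // n IHn M leMn pM nsMX.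
have [-> | ntM] := eqsVneq M 1; first exact: cents1.
have [L cfL] := chief_factor_exists nsMX ntM.
have /chief_factorP[pLM nLX _ _] := cfL; have sLM := proper_sub pLM.
have [sMX nMX] := andP nsMX; have nLM := subset_trans sMX nLX.
have pL := pgroupS sLM pM.
have pML : p \in \pi(M / L).
  have ntML : M / L != 1 by rewrite -subG1 quotient_sub1 // proper_subn.
  have [p_pr pML _] := pgroup_pdiv (quotient_pgroup L pM) ntML.
  by rewrite mem_primes p_pr cardG_gt0.
apply: coprime_cents_factor (subset_trans sQX nMX) (subset_trans sQX nLX) _ _ _ _ _.
- by rewrite /normal sLM.
- exact: pnat_coprime pL p'Q.
- exact: pgroup_sol pL.
- apply: IHn => //; first exact: leq_trans (proper_card pLM) leMn.
  by rewrite /normal (subset_trans sLM sMX).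
- exact: inF_chief_cent FX cfL pML gp'q qQ sQX.
Qed.

Lemma inF_cents_minnormal G X N Q (p q : nat) :
  minnormal N G -> N \subset X -> X \subset G -> inF g X -> p \in \pi(N) ->
  q.-group Q -> Q \subset X -> q \notin g p -> p != q -> Q \subset 'C(N).
Proof.
move=> minN sNX sXG FX pN qQ sQX gp'q pq.
have [/andP[_ nNG] _] := mingroupP minN.
have nsNX : N <| X by rewrite /normal sNX (subset_trans sXG nNG).
have [abN | nabN] := boolP (abelian N).
  have [_ _ /is_abelemP[r _ /abelem_pgroup rN]] :=
    minnormal_solvable minN (subxx N) (abelian_sol abN).
  have pN' : p.-group N by have := pnatPpi rN pN; rewrite inE => /eqP->.
  exact: inF_cents_pgroup FX pN' nsNX qQ sQX gp'q pq.
apply: (Fitting1_cents_minnormal (Fitting_minnormal_nonabelian minN nabN) nsNX sQX).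
move=> M minM sMN; have [/andP[ntM nMX] _] := mingroupP minM.
have pM : p \in \pi(M / 1).
  rewrite /= -(card_isog (quotient1_isog M)).
  exact: minnormal_pi_sub minN pN sMN (subset_trans sNX nMX) ntM.
have := inF_chief_cent FX (chief_factor1 minM (subset_trans sMN sNX)) pM gp'q qQ sQX.
by rewrite subG1 => /eqP/commG1P; rewrite centsC.
Qed.

Lemma inF_chief_factor_above X N Y B A p : inF g X -> Y \subset 'N(N) -> N * X = Y ->
  N \subset B -> chief_factor Y B A -> p \in \pi(A / B) ->
  (g p).-group (Y / sect_cent Y A B).
Proof.
move=> /inFP FX nNY defY sNB cf pAB.
rewrite /pgroup -(card_quotient_sect_cent_meet nNY defY sNB cf).
apply: (FX _ _ (chief_factor_meet nNY defY sNB cf) p).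
by rewrite /= (card_quotient_meet defY sNB cf).
Qed.

Lemma inF_mulg G N X Y : G \subset 'N(N) -> N \subset G -> X \subset G -> N * X = Y ->
  inF g X -> (forall p, p \in \pi(N) -> (g p).-group (G / 'C_G(N))) -> inF g Y.
Proof.
move=> nNG sNG sXG defY FX gGN.
have nNY : Y \subset 'N(N) by rewrite -defY mul_subG ?normG ?(subset_trans sXG).
have sYG : Y \subset G by rewrite -defY mul_subG.
have nsNY : N <| Y by rewrite /normal -{1}defY mulG_subl.
apply/inFP => B A cf p pAB; have /chief_factorP[pBA nBY /andP[sAY nAY] _] := cf.
have [sANB | sA'NB] := boolP (A \subset N <*> B); last first.
  rewrite -(sect_cent_join nsNY cf sA'NB).
  have cfNBA := chief_factor_join nsNY cf sA'NB.
  apply: inF_chief_factor_above FX nNY defY (joing_subl N B) cfNBA _.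
  by rewrite /= (card_quotient_join nsNY cf sA'NB).
have nNB := subset_trans (subset_trans (proper_sub pBA) sAY) nNY.
have pN := pi_quotient_joing nNB (subset_trans sAY nBY) sANB pAB.
have sYCS := cent_sub_sect_cent_joing nBY nNB sANB.
have nSY := sect_cent_norm nAY nBY (subset_trans sAY nBY).
rewrite sect_centE ?(subset_trans sAY) // in sYCS nSY *.
apply: (quotient_pgroupSI (gGN p pN) _ sYG _ nSY); first by rewrite normsI ?normG ?norms_cent.
by rewrite setIA (setIidPl sYG).
Qed.

Lemma normal_sub_IntF G N : G \subset 'N(N) -> N \subset G ->
  (forall p, p \in \pi(N) -> (g p).-group (G / 'C_G(N))) -> N \subset IntF g G.
Proof.
move=> nNG sNG gGN; apply/bigcapsP => X /and3P[sXG FX /forall_inP maxX].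
have FNX := inF_mulg nNG sNG sXG (esym (norm_joinEr (subset_trans sXG nNG))) FX gGN.
have := maxX (N <*> X)%G; rewrite joing_subr join_subG sNG sXG FNX => /(_ isT)/eqP <-.
exact: joing_subl.
Qed.

Section PrimeInG.

Hypothesis hg_self : forall p, prime p -> p \in g p.

Lemma inF_pgroup Q (p : nat) : p.-group Q -> inF g Q.
Proof.
move=> pQ; apply/inFP => B A cf r rAB; have /chief_factorP[_ _ /andP[sAQ _] _] := cf.
have r_pr : prime r by move: rAB; rewrite mem_primes => /andP[].
have rQ : r \in \pi(Q).
  move: rAB; rewrite !mem_primes => /and3P[-> _ rAB]; rewrite cardG_gt0.
  exact: dvdn_trans rAB (dvdn_trans (dvdn_morphim _ A) (cardSg sAQ)).
have rp : r = p by apply/eqP; have := pnatPpi pQ rQ; rewrite inE.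
rewrite rp in r_pr *.
exact: pi_pnat (morphim_pgroup _ pQ) (hg_self r_pr).
Qed.

Lemma minnormal_sub_IntF G N p : minnormal N G -> N \subset IntF g G ->
  p \in \pi(N) -> (g p).-group (G / 'C_G(N)).
Proof.
move=> minN sNI pN; have [/andP[_ nNG] _] := mingroupP minN.
have p_pr : prime p by move: pN; rewrite mem_primes => /andP[].
apply/pgroupP => q q_pr qGC; apply: contraT => gp'q.
have [Q sylQ] := Sylow_exists q G; have [sQG qQ q'iQ] := and3P sylQ.
have [X FmX sQX] := Fmaximal_exists sQG (inF_pgroup qQ).
have [sXG FX _] := and3P FmX.
have sNX : N \subset X := subset_trans sNI (bigcap_inf X FmX).
have pq : p != q by apply: contraNneq gp'q => <-; apply: hg_self.
have cNQ := inF_cents_minnormal minN sNX sXG FX pN qQ sQX gp'q pq.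
have sQC : Q \subset 'C_G(N) by rewrite subsetI sQG.
rewrite card_quotient ?normsI ?normG ?norms_cent // in qGC.
have qGQ : q \in \pi(#|G : Q|).
  by rewrite mem_primes q_pr indexg_gt0 (dvdn_trans qGC (indexgS G sQC)).
by have := pnatPpi q'iQ qGQ; rewrite !inE eqxx.
Qed.

End PrimeInG.

End LocalFormation.

Theorem mainTheorem13 (g : nat -> nat_pred)
  (hg_self : forall p : nat, prime p -> p \in g p)
  (hg_primes : forall p q : nat, prime p -> q \in g p -> prime q)
  (gT : finGroupType) (G K H : {group gT})
  (nKG : K <| G) (chiefHK : chief_factor G K H) :
  (H / K \subset IntF g (G / K)) <->
  (forall p : nat, p \in \pi(H / K) -> (g p).-group (G / sect_cent G H K)).
Proof.
have nsHG : H <| G by case/andP: chiefHK.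
have minHK := chief_factor_minnormal chiefHK.
have [/andP[_ nHKG] _] := mingroupP minHK.
have sHKG : H / K \subset G / K := quotientS K (normal_sub nsHG).
have pgroupE p :
  (g p).-group ((G / K) / 'C_(G / K)(H / K)) = (g p).-group (G / sect_cent G H K).
  by rewrite /pgroup card_quotient_sect_cent.
split=> [sHKI p pHK | gGC].
  by rewrite -pgroupE (minnormal_sub_IntF hg_self minHK).
by apply: normal_sub_IntF nHKG sHKG _ => p pHK; rewrite pgroupE gGC.
Qed.
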